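(* Let $P$ be any of cost-SR, cost-PR, cost-SPR, cost-LPR, cost-BC. The system MaxSAT resolution $+$ $P$ is complete: for every MaxSAT instance with satisfiable hard clauses $H_0=\{C_1\lor b_1,\dots,C_m\lor b_m\}$ and soft clauses $S_0=\{\lnot b_1,\dots,\lnot b_m\}$ and with $\mathrm{cost}(H_0)=k$, there is a MaxSAT resolution $+$ $P$ derivation $(H_0,S_0),\dots,(H_t,S_t)$ such that $S_t$ contains $k$ copies of the empty clause $\bot$.
   Context: $b_1,\dots,b_m$ are distinct blocking variables not occurring in $C_1,\dots,C_m$; $\mathrm{cost}(\alpha)=\sum_i\alpha(b_i)$, $\mathrm{cost}(H)=\min\{\mathrm{cost}(\alpha):\alpha\text{ total},\alpha\models H\}$. Notation: substitutions map variables to $0,1$ or literals; $(\sigma\circ\tau)(x)=\sigma(\tau(x))$; $C{\upharpoonright}_\sigma$ and $\Gamma{\upharpoonright}_\sigma$ denote restriction (clauses set to $1$ removed); $\lnot C$ is the partial assignment falsifying $C$; $\Gamma\vdash_1 C$ means unit propagation on $\Gamma{\upharpoonright}_{\lnot C}$ derives $\bot$. $C$ is cost-SR w.r.t. $\Gamma$ if some substitution $\sigma$ satisfies (1) $\Gamma{\upharpoonright}_{\lnot C}\vdash_1(\Gamma\cup\{C\}){\upharpoonright}_\sigma$ and (2) $\mathrm{cost}(\tau\circ\sigma)\le\mathrm{cost}(\tau)$ for all total $\tau\supseteq\lnot C$; cost-PR if $\sigma$ can be a partial assignment; cost-SPR if a partial assignment with the same domain as $\lnot C$; cost-LPR if moreover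 it differs from $\lnot C$ on exactly one variable. $C\lor\ell$ is cost-BC w.r.t. $\Gamma$ if for every $D\lor\lnot\ell\in\Gamma$, $C\lor D$ is a tautology, and $\ell$ is not a positive blocking variable. A MaxSAT resolution $+$ $P$ derivation is a sequence of pairs of multisets $(H_i,S_i)$ where each step is one of: (a) $S_i=S_{i-1}$, $H_i=H_{i-1}\cup\{C\}$ with $C$ obtained by resolution (or weakening) from $H_{i-1}$; (a') $S_i=S_{i-1}$, $H_i=H_{i-1}\cup\{C\}$ with $C$ satisfying $P$ w.r.t. $H_{i-1}$; (b) $S_i=S_{i-1}\cup\{C\}$ for some $C\in H_{i-1}$, $H_i=H_{i-1}$; (c) $S_i=S_{i-1}\setminus\{C\}\cup\{C\lor x,C\lor\lnot x\}$ for $C\in S_{i-1}$, $H_i=H_{i-1}$; (d) $S_i=S_{i-1}\setminus\{C\lor x,C\lor\lnot x\}\cup\{C\}$ for $\{C\lor x,C\lor\lnot x\}\subseteq S_{i-1}$, $H_i=H_{i-1}$. *)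

From Stdlib Require Import List Arith Bool Permutation.
Import ListNotations.

(** Variables are natural numbers; a literal is (x, true) = x or (x, false) = ~x. *)
Definition var := nat.
Definition literal : Type := (nat * bool)%type.
Definition lvar (l : literal) : var := fst l.
Definition lneg (l : literal) : literal := (fst l, negb (snd l)).

(** A clause is the disjunction of the literals of a list (read as a set). *)
Definition clause : Type := list literal.
(** Multisets of clauses are lists (read up to permutation). *)
Definition cnf : Type := list clause.

Definition lit_eq_dec : forall l1 l2 : literal, {l1 = l2} + {l1 <> l2}.
Proof. decide equality; [apply bool_dec | apply Nat.eq_dec]. Defined.

Definition clause_vars (C : clause) : list var := map lvar C.
Definition tautology (C : clause) : Prop := exists l, In l C /\ In (lneg l) C.
Definition clause_equiv (C D : clause) : Prop := incl C D /\ incl D C.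

Definition assignment := nat -> bool.
Definition eval_lit (a : assignment) (l : literal) : bool :=
  if snd l then a (fst l) else negb (a (fst l)).
Definition sat_clause (a : assignment) (C : clause) : Prop :=
  exists l, In l C /\ eval_lit a l = true.
Definition sat_cnf (a : assignment) (F : cnf) : Prop :=
  forall C, In C F -> sat_clause a C.

Definition cost (B : list var) (a : assignment) : nat :=
  fold_right (fun b acc => (if a b then 1 else 0) + acc) 0 B.
Definition is_cost (B : list var) (H : cnf) (k : nat) : Prop :=
  (exists a, sat_cnf a H /\ cost B a = k) /\
  (forall a, sat_cnf a H -> k <= cost B a).

Inductive img : Type := IConst (b : bool) | ILit (l : literal).
Definition subst := nat -> img.
Definition img_neg (i : img) : img :=
  match i with IConst b => IConst (negb b) | ILit l => ILit (lneg l) end.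
Definition subst_lit (s : subst) (l : literal) : img :=
  if snd l then s (fst l) else img_neg (s (fst l)).
Definition eval_img (a : assignment) (i : img) : bool :=
  match i with IConst b => b | ILit l => eval_lit a l end.
Definition compose (a : assignment) (s : subst) : assignment :=
  fun x => eval_img a (s x).

(** Restriction: C|sigma; None if C is set to 1 (and then removed). *)
Definition restrict_clause (s : subst) (C : clause) : option clause :=
  if existsb (fun l => match subst_lit s l with IConst true => true | _ => false end) C
  then None
  else Some (flat_map (fun l => match subst_lit s l with
                                | ILit l' => [l'] | IConst _ => [] end) C).
Definition restrict (s : subst) (F : cnf) : cnf :=
  flat_map (fun C => match restrict_clause s C with Some D => [D] | None => [] end) F.

(** ~C : the partial assignment falsifying C (as a substitution that is the
    identity outside the variables of C). *)
Definition neg_clause (C : clause) : subst :=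
  fun x => match find (fun l => Nat.eqb (fst l) x) C with
           | Some l => IConst (negb (snd l))
           | None => ILit (x, true)
           end.

Definition assign_lit (l : literal) : subst :=
  fun x => if Nat.eqb x (fst l) then IConst (snd l) else ILit (x, true).

Inductive up_refutes : cnf -> Prop :=
| up_empty : forall F, In [] F -> up_refutes F
| up_unit : forall F D l, In D F -> In l D -> Forall (eq l) D ->
    up_refutes (restrict (assign_lit l) F) -> up_refutes F.

Definition up_implies (G : cnf) (C : clause) : Prop :=
  up_refutes (restrict (neg_clause C) G).

Definition extends_neg (a : assignment) (C : clause) : Prop :=
  forall l, In l C -> eval_lit a l = false.

Definition cost_witness (B : list var) (G : cnf) (C : clause) (s : subst) : Prop :=
  (forall D, In D (restrict s (C :: G)) -> up_implies (restrict (neg_clause C) G) D)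
  /\ (forall a, extends_neg a C -> cost B (compose a s) <= cost B a).

Definition is_partial_assignment (s : subst) : Prop :=
  forall x, (exists b, s x = IConst b) \/ s x = ILit (x, true).
Definition assigns (s : subst) (x : var) : Prop := exists b, s x = IConst b.

Definition cost_SR B G C := exists s, cost_witness B G C s.
Definition cost_PR B G C := exists s, is_partial_assignment s /\ cost_witness B G C s.
Definition cost_SPR B G C :=
  exists s, is_partial_assignment s /\
    (forall x, assigns s x <-> In x (clause_vars C)) /\ cost_witness B G C s.
Definition cost_LPR B G C :=
  exists s, is_partial_assignment s /\
    (forall x, assigns s x <-> In x (clause_vars C)) /\
    (exists x, In x (clause_vars C) /\ s x <> neg_clause C x /\
       forall y, In y (clause_vars C) -> s y <> neg_clause C y -> y = x) /\
    cost_witness B G C s.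
(** C \/ l is cost-BC: C = E with l removed; every D \/ ~l in G gives a
    tautology C \/ D; l is not a positive blocking variable. *)
Definition cost_BC (B : list var) (G : cnf) (E : clause) : Prop :=
  exists l, In l E /\ ~ (snd l = true /\ In (fst l) B) /\
    forall D', In D' G -> In (lneg l) D' ->
      tautology (remove lit_eq_dec l E ++ remove lit_eq_dec (lneg l) D').

Inductive redundancy := RSR | RPR | RSPR | RLPR | RBC.
Definition redundant (P : redundancy) : list var -> cnf -> clause -> Prop :=
  match P with
  | RSR => cost_SR | RPR => cost_PR | RSPR => cost_SPR
  | RLPR => cost_LPR | RBC => cost_BC end.

Definition res_or_weak (H : cnf) (C : clause) : Prop :=
  (exists D1 D2 x, In D1 H /\ In D2 H /\ In (x, true) D1 /\ In (x, false) D2 /\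
     clause_equiv C (remove lit_eq_dec (x, true) D1 ++ remove lit_eq_dec (x, false) D2))
  \/ (exists D, In D H /\ incl D C).

Inductive step (P : redundancy) (B : list var) : cnf * cnf -> cnf * cnf -> Prop :=
| step_a : forall H S H' C, res_or_weak H C -> Permutation H' (C :: H) ->
    step P B (H, S) (H', S)
| step_a' : forall H S H' C, redundant P B H C -> Permutation H' (C :: H) ->
    step P B (H, S) (H', S)
| step_b : forall H S S' C, In C H -> Permutation S' (C :: S) ->
    step P B (H, S) (H, S')
| step_c : forall H S S' R C x C1 C2,
    Permutation S (C :: R) ->
    clause_equiv C1 ((x, true) :: C) -> clause_equiv C2 ((x, false) :: C) ->
    Permutation S' (C1 :: C2 :: R) ->
    step P B (H, S) (H, S')
| step_d : forall H S S' R C x C1 C2,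
    Permutation S (C1 :: C2 :: R) ->
    clause_equiv C1 ((x, true) :: C) -> clause_equiv C2 ((x, false) :: C) ->
    Permutation S' (C :: R) ->
    step P B (H, S) (H, S').

Inductive derives (P : redundancy) (B : list var) : cnf * cnf -> cnf * cnf -> Prop :=
| derives_refl : forall st, derives P B st st
| derives_step : forall st1 st2 st3, step P B st1 st2 -> derives P B st2 st3 ->
    derives P B st1 st3.

Definition is_empty_clause (C : clause) : bool :=
  match C with [] => true | _ => false end.
Definition count_empty (S : cnf) : nat := length (filter is_empty_clause S).

(** The instance: pairs (C_i, b_i). *)
Definition blocking (inst : list (clause * var)) : list var := map snd inst.
Definition hard0 (inst : list (clause * var)) : cnf :=
  map (fun p => fst p ++ [(snd p, true)]) inst.
Definition soft0 (inst : list (clause * var)) : cnf :=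
  map (fun p => [(snd p, false)]) inst.

From Stdlib Require Import List Arith Lia Permutation Setoid Classical.
Import ListNotations.

(* Let V be the variables of the instance.  Splitting (rule (c)) turns each
   soft clause ~b into the 2^|V| clauses ~b \/ m, where m ranges over the
   maximal clauses over V; m is falsified by exactly one assignment alpha on V.
   Either alpha falsifies a hard clause h, and then m is a weakening of h and
   can be moved into S k times (rule (b)); or alpha satisfies H, so at least
   cost(alpha) >= k blocking variables b are true in alpha, and for each of
   them ~b \/ m is m itself.  So S holds k full copies of the maximal clauses,
   and merging (rule (d)) collapses each copy to the empty clause. *)

Definition inb (l : literal) (C : clause) : bool :=
  if in_dec lit_eq_dec l C then true else false.

Lemma inb_true l C : inb l C = true <-> In l C.
Proof. unfold inb. destruct (in_dec lit_eq_dec l C); intuition discriminate. Qed.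

Definition add_lit (l : literal) (C : clause) : clause :=
  if inb l C then C else C ++ [l].

Lemma add_lit_equiv l C : clause_equiv (C ++ [l]) (add_lit l C).
Proof.
  unfold add_lit. destruct (inb l C) eqn:Hl; [| split; apply incl_refl].
  apply inb_true in Hl. split; intros l' Hl'; [| apply in_or_app; left; exact Hl'].
  apply in_app_or in Hl' as [|[<-|[]]]; assumption.
Qed.

Lemma add_lit_id l C : In l C -> add_lit l C = C.
Proof. intros HlC. unfold add_lit. rewrite (proj2 (inb_true _ _) HlC). reflexivity. Qed.

Definition subsumedb (H : cnf) (C : clause) : bool :=
  existsb (fun h => forallb (fun l => inb l C) h) H.

Lemma subsumedb_true H C : subsumedb H C = true <-> exists h, In h H /\ incl h C.
Proof.
  unfold subsumedb. rewrite existsb_exists.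
  setoid_rewrite forallb_forall. setoid_rewrite inb_true. reflexivity.
Qed.

Definition count_negated (B : list var) (C : clause) : nat :=
  length (filter (fun b => inb (b, false) C) B).

Lemma cost_le_count_negated B C (a : assignment) :
  (forall b, In b B -> a b = true -> In (b, false) C) -> cost B a <= count_negated B C.
Proof.
  unfold count_negated. induction B as [|b B IH]; intros Hneg; simpl; [lia |].
  assert (IHB : cost B a <= length (filter (fun b => inb (b, false) C) B))
    by (apply IH; intros; apply Hneg; [right |]; assumption).
  destruct (a b) eqn:Hab.
  - rewrite (proj2 (inb_true _ _) (Hneg b (or_introl eq_refl) Hab)). simpl. lia.
  - destruct (inb (b, false) C); simpl; lia.
Qed.

(* The leaves of the complete splitting tree of [C] on [V]: [C] extended by one
   literal on each variable of [V], in all 2^|V| ways. *)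
Fixpoint expansion (C : clause) (V : list var) : cnf :=
  match V with
  | [] => [C]
  | x :: V' => expansion ((x, true) :: C) V' ++ expansion ((x, false) :: C) V'
  end.

Lemma expansion_app V : forall C, expansion C V = map (fun q => q ++ C) (expansion [] V).
Proof.
  induction V as [|x V IH]; intros C; [reflexivity |]. simpl.
  rewrite !(IH (_ :: _)), map_app, !map_map.
  f_equal; apply map_ext; intros; rewrite <- app_assoc; reflexivity.
Qed.

Lemma in_expansion_nil V q : NoDup V -> In q (expansion [] V) ->
  exists a : assignment, forall l, In l q <-> In (fst l) V /\ eval_lit a l = false.
Proof.
  revert q. induction V as [|x V IH]; intros q Hnd Hq.
  { destruct Hq as [<-|[]]. exists (fun _ => true). simpl. tauto. }
  inversion Hnd as [|? ? HxV HndV]; subst.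
  assert (Hq' : exists s q', q = q' ++ [(x, s)] /\ In q' (expansion [] V)).
  { simpl in Hq. rewrite !(expansion_app V (_ :: _)) in Hq.
    apply in_app_or in Hq as [Hq|Hq]; apply in_map_iff in Hq as [q' [<- Hq']]; eauto. }
  destruct Hq' as [s [q' [-> Hq']]].
  destruct (IH q' HndV Hq') as [a Ha].
  exists (fun y => if Nat.eqb y x then negb s else a y).
  intros [y t]. rewrite in_app_iff, Ha. unfold eval_lit. simpl.
  destruct (Nat.eqb_spec y x) as [->|Hyx].
  - destruct s, t; simpl; intuition congruence.
  - intuition congruence.
Qed.

Lemma count_occ_concat_repeat {A} (eq_dec : forall x y : A, {x = y} + {x <> y}) l n x :
  count_occ eq_dec (concat (repeat l n)) x = n * count_occ eq_dec l x.
Proof. induction n; simpl; [reflexivity |]. rewrite count_occ_app, IHn. lia. Qed.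

Lemma count_occ_filter {A} (eq_dec : forall x y : A, {x = y} + {x <> y}) f l x :
  count_occ eq_dec (filter f l) x = if f x then count_occ eq_dec l x else 0.
Proof.
  induction l as [|y l IH]; simpl; [destruct (f x); reflexivity |].
  destruct (f y) eqn:Hy; simpl; destruct (eq_dec y x) as [->|];
    rewrite ?Hy, IH; destruct (f x); congruence.
Qed.

Lemma Permutation_app_of_count_occ_le {A} (eq_dec : forall x y : A, {x = y} + {x <> y}) :
  forall T S : list A, (forall x, count_occ eq_dec T x <= count_occ eq_dec S x) ->
  exists R, Permutation S (T ++ R).
Proof.
  induction T as [|t T IH]; intros S HTS; [exists S; reflexivity |].
  assert (Ht : In t S).
  { apply (count_occ_In eq_dec). specialize (HTS t). simpl in HTS.
    destruct (eq_dec t t); [lia | contradiction]. }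
  apply in_split in Ht as [S1 [S2 ->]].
  destruct (IH (S1 ++ S2)) as [R HR].
  - intros x. specialize (HTS x). simpl in HTS. rewrite count_occ_app in *. simpl in HTS.
    destruct (eq_dec t x); lia.
  - exists R. rewrite <- Permutation_middle. simpl. constructor. exact HR.
Qed.

Definition clause_eq_dec : forall C D : clause, {C = D} + {C <> D} := list_eq_dec lit_eq_dec.

Local Notation occ := (count_occ clause_eq_dec).

Lemma occ_map_add_lit l F C : In l C -> occ F C <= occ (map (add_lit l) F) C.
Proof.
  intros HlC. induction F as [|D F IH]; simpl; [lia |].
  destruct (clause_eq_dec D C) as [->|]; [| destruct (clause_eq_dec _ _); lia].
  rewrite (add_lit_id _ _ HlC).
  destruct (clause_eq_dec C C); [lia | contradiction].
Qed.

Lemma occ_expanded_negations B F C :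
  occ F C * count_negated B C <=
  occ (concat (map (fun b => map (add_lit (b, false)) F) B)) C.
Proof.
  unfold count_negated. induction B as [|b B IH]; simpl; [lia |].
  rewrite count_occ_app. destruct (inb _ C) eqn:Hb; simpl.
  - pose proof (occ_map_add_lit _ F C (proj1 (inb_true _ _) Hb)). lia.
  - lia.
Qed.

Definition instance_vars (H : cnf) (B : list var) : list var :=
  nodup Nat.eq_dec (flat_map clause_vars H ++ B).

Section MaximalClauses.

Variables (H : cnf) (B : list var) (k : nat).
Hypothesis H_cost : is_cost B H k.

Let V := instance_vars H B.
Let L := expansion [] V.

Lemma maximal_clause_subsumed_or_costly q : In q L ->
  subsumedb H q = true \/ k <= count_negated B q.
Proof.
  intros Hq. destruct (in_expansion_nil V q (NoDup_nodup _ _) Hq) as [a Ha].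
  destruct (classic (exists h, In h H /\ forall l, In l h -> eval_lit a l = false))
    as [[h [Hh Hfalse]]|Hsat].
  - left. apply subsumedb_true. exists h. split; [exact Hh |].
    intros l Hl. apply Ha. split; [| apply Hfalse, Hl].
    apply nodup_In, in_or_app. left. apply in_flat_map. exists h.
    split; [| apply in_map]; assumption.
  - right. assert (Ha_sat : sat_cnf a H).
    { intros C HC. apply NNPP. intros HnC. apply Hsat. exists C. split; [exact HC |].
      intros l Hl. apply Bool.not_true_is_false. intros Hlt. apply HnC. exists l; auto. }
    apply (Nat.le_trans _ _ _ (proj2 H_cost a Ha_sat)), cost_le_count_negated.
    intros b Hb Hab. apply Ha. unfold eval_lit. simpl. rewrite Hab.
    split; [apply nodup_In, in_or_app; right; exact Hb | reflexivity].
Qed.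

Lemma maximal_clauses_k_copies :
  exists R, Permutation
    (concat (map (fun b => map (add_lit (b, false)) L) B)
     ++ concat (repeat (filter (subsumedb H) L) k))
    (concat (repeat L k) ++ R).
Proof.
  apply (Permutation_app_of_count_occ_le clause_eq_dec). intros C.
  rewrite count_occ_app, (count_occ_concat_repeat _ L), count_occ_concat_repeat, count_occ_filter.
  pose proof (occ_expanded_negations B L C).
  destruct (occ L C) as [|n] eqn:HLC; [lia |].
  assert (HC : In C L) by (apply (count_occ_In clause_eq_dec); lia).
  destruct (maximal_clause_subsumed_or_costly C HC) as [->|Hk]; nia.
Qed.

End MaximalClauses.

Lemma derives_trans P B st1 st2 st3 :
  derives P B st1 st2 -> derives P B st2 st3 -> derives P B st1 st3.
Proof.
  induction 1; intros; [assumption | econstructor; eauto].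
Qed.

Lemma step_app_soft P B H S H' S' X :
  step P B (H, S) (H', S') -> step P B (H, S ++ X) (H', S' ++ X).
Proof.
  inversion 1; subst.
  - eapply step_a; eauto.
  - eapply step_a'; eauto.
  - eapply step_b; [eassumption |].
    apply (@Permutation_app_tail _ _ (_ :: _)); eassumption.
  - eapply (step_c _ _ _ _ _ (R ++ X)); try eassumption;
      [apply (@Permutation_app_tail _ _ (_ :: _))
      | apply (@Permutation_app_tail _ _ (_ :: _ :: _))]; eassumption.
  - eapply (step_d _ _ _ _ _ (R ++ X)); try eassumption;
      [apply (@Permutation_app_tail _ _ (_ :: _ :: _))
      | apply (@Permutation_app_tail _ _ (_ :: _))]; eassumption.
Qed.

Lemma derives_app_soft P B st1 st2 X :
  derives P B st1 st2 -> derives P B (fst st1, snd st1 ++ X) (fst st2, snd st2 ++ X).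
Proof.
  induction 1 as [|[H1 S1] [H2 S2] st3 Hstep _ IH]; [constructor |].
  eapply derives_step; [apply step_app_soft, Hstep | exact IH].
Qed.

Lemma derives_add_weakenings P B H S L :
  (forall C, In C L -> exists D, In D H /\ incl D C) -> derives P B (H, S) (L ++ H, S).
Proof.
  induction L as [|C L IH]; intros HL; [constructor |].
  eapply derives_trans; [apply IH; intros; apply HL; right; assumption |].
  eapply derives_step; [| constructor].
  apply (step_a _ _ _ _ _ C); [| apply Permutation_refl].
  right. destruct (HL C (or_introl eq_refl)) as [D [HD HDC]].
  exists D. split; [apply in_or_app; right |]; assumption.
Qed.

Lemma derives_add_subsumed P B H S F :
  derives P B (H, S) (filter (subsumedb H) F ++ H, S).
Proof.
  apply derives_add_weakenings. intros C HC.
  apply filter_In in HC as [_ HC]. apply subsumedb_true, HC.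
Qed.

Section SoftMoves.

Variables (P : redundancy) (B : list var) (H : cnf).

Definition soft_reach (S T : cnf) : Prop := derives P B (H, S) (H, T).

Lemma soft_reach_trans S T U : soft_reach S T -> soft_reach T U -> soft_reach S U.
Proof. apply derives_trans. Qed.

Lemma soft_reach_split x C R :
  soft_reach (C :: R) (((x, true) :: C) :: ((x, false) :: C) :: R).
Proof.
  eapply derives_step; [| constructor].
  eapply (step_c _ _ _ _ _ R C x); try reflexivity; split; apply incl_refl.
Qed.

Lemma soft_reach_merge x C C1 C2 R :
  clause_equiv C1 ((x, true) :: C) -> clause_equiv C2 ((x, false) :: C) ->
  soft_reach (C1 :: C2 :: R) (C :: R).
Proof.
  intros H1 H2. eapply derives_step; [| constructor].
  eapply (step_d _ _ _ _ _ R C x C1 C2); try reflexivity; assumption.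
Qed.

(* A split immediately undone by a merge may reorder the whole multiset. *)
Lemma soft_reach_perm S T : Permutation S T -> soft_reach S T.
Proof.
  intros HST. destruct S as [|C R].
  { apply Permutation_nil in HST as ->. constructor. }
  eapply soft_reach_trans; [apply (soft_reach_split 0) |].
  eapply derives_step; [| constructor].
  eapply (step_d _ _ _ _ _ R C 0); [reflexivity | split; apply incl_refl ..
    | symmetry; exact HST].
Qed.

Lemma soft_reach_equiv C C' R : clause_equiv C C' -> soft_reach (C :: R) (C' :: R).
Proof.
  intros [HCC' HC'C].
  eapply soft_reach_trans; [apply (soft_reach_split 0) |].
  apply (soft_reach_merge 0 C'); split; apply incl_cons; try (left; reflexivity);
    intros l Hl; right; auto.
Qed.

Lemma soft_reach_app_r S T X : soft_reach S T -> soft_reach (S ++ X) (T ++ X).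
Proof. exact (derives_app_soft P B (H, S) (H, T) X). Qed.

Lemma soft_reach_app_l S T X : soft_reach S T -> soft_reach (X ++ S) (X ++ T).
Proof.
  intros HST. eapply soft_reach_trans; [apply soft_reach_perm, Permutation_app_comm |].
  eapply soft_reach_trans; [apply soft_reach_app_r, HST |].
  apply soft_reach_perm, Permutation_app_comm.
Qed.

Lemma soft_reach_copy_hard S L : incl L H -> soft_reach S (L ++ S).
Proof.
  induction L as [|C L IH]; intros HL; [constructor |].
  eapply soft_reach_trans; [apply IH; intros D HD; apply HL; right; exact HD |].
  eapply derives_step; [| constructor].
  eapply step_b; [apply HL; left; reflexivity | reflexivity].
Qed.

Lemma soft_reach_expand V : forall C R, soft_reach (C :: R) (expansion C V ++ R).
Proof.
  induction V as [|x V IH]; intros C R; [constructor |].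
  eapply soft_reach_trans; [apply (soft_reach_split x) |].
  eapply soft_reach_trans; [apply IH |]. simpl.
  eapply soft_reach_trans; [apply soft_reach_perm, Permutation_sym, Permutation_middle |].
  eapply soft_reach_trans; [apply IH |].
  apply soft_reach_perm. rewrite !app_assoc. apply Permutation_app_tail, Permutation_app_comm.
Qed.

Lemma soft_reach_collapse V : forall C R, soft_reach (expansion C V ++ R) (C :: R).
Proof.
  induction V as [|x V IH]; intros C R; [constructor |]. simpl.
  rewrite <- app_assoc.
  eapply soft_reach_trans; [apply IH |].
  eapply soft_reach_trans; [apply soft_reach_perm, Permutation_middle |].
  eapply soft_reach_trans; [apply IH |].
  eapply soft_reach_trans; [apply soft_reach_perm, perm_swap |].
  apply (soft_reach_merge x); split; apply incl_refl.
Qed.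

Lemma soft_reach_expand_lit V l R :
  soft_reach ([l] :: R) (map (add_lit l) (expansion [] V) ++ R).
Proof.
  eapply soft_reach_trans; [apply (soft_reach_expand V) |].
  rewrite expansion_app. induction (expansion [] V) as [|q F IH]; [constructor |].
  eapply soft_reach_trans; [apply soft_reach_equiv, add_lit_equiv |].
  apply (soft_reach_app_l _ _ [_]), IH.
Qed.

Lemma soft_reach_expand_negations V Bs R :
  soft_reach (map (fun b => [(b, false)]) Bs ++ R)
    (concat (map (fun b => map (add_lit (b, false)) (expansion [] V)) Bs) ++ R).
Proof.
  induction Bs as [|b Bs IH]; [constructor |]. simpl.
  eapply soft_reach_trans; [apply soft_reach_expand_lit |].
  rewrite <- app_assoc. apply soft_reach_app_l, IH.
Qed.

Lemma soft_reach_collapse_copies V n R :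
  soft_reach (concat (repeat (expansion [] V) n) ++ R) (repeat [] n ++ R).
Proof.
  induction n as [|n IH]; [constructor |]. simpl.
  rewrite <- app_assoc.
  eapply soft_reach_trans; [apply soft_reach_collapse |].
  apply (soft_reach_app_l _ _ [[]]), IH.
Qed.

End SoftMoves.

Lemma incl_concat_repeat {A} (l : list A) n : incl (concat (repeat l n)) l.
Proof.
  intros x Hx. apply in_concat in Hx as [l' [Hl' Hx]].
  apply repeat_spec in Hl' as ->. exact Hx.
Qed.

Lemma count_empty_repeat n R : n <= count_empty (repeat [] n ++ R).
Proof. unfold count_empty. rewrite filter_app, length_app. induction n; simpl; lia. Qed.

Lemma soft0_blocking inst : soft0 inst = map (fun b => [(b, false)]) (blocking inst).
Proof. unfold soft0, blocking. rewrite map_map. reflexivity. Qed.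

Theorem theorem7p2 :
  forall (P : redundancy) (inst : list (clause * var)) (k : nat),
    NoDup (blocking inst) ->
    (forall Ci b, In Ci (map fst inst) -> In b (blocking inst) ->
       ~ In b (clause_vars Ci)) ->
    (exists a, sat_cnf a (hard0 inst)) ->
    is_cost (blocking inst) (hard0 inst) k ->
    exists Ht St,
      derives P (blocking inst) (hard0 inst, soft0 inst) (Ht, St) /\
      k <= count_empty St.
Proof.
  intros P inst k _ _ _ Hcost.
  rewrite soft0_blocking.
  set (B := blocking inst) in *. set (H := hard0 inst) in *.
  set (L := expansion [] (instance_vars H B)).
  set (Hs := filter (subsumedb H) L).
  destruct (maximal_clauses_k_copies H B k Hcost) as [R HR].
  exists (Hs ++ H), (repeat [] k ++ R). split; [| apply count_empty_repeat].
  eapply derives_trans; [apply derives_add_subsumed |].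
  eapply soft_reach_trans; [apply (soft_reach_copy_hard _ _ _ _ (concat (repeat Hs k))),
    incl_appl, incl_concat_repeat |].
  eapply soft_reach_trans; [apply soft_reach_perm, Permutation_app_comm |].
  eapply soft_reach_trans; [apply soft_reach_expand_negations |].
  eapply soft_reach_trans; [apply soft_reach_perm, HR |].
  apply soft_reach_collapse_copies.
Qed.
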